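(* Let $N,n,m,p$ be positive integers, $B\in\mathbb{R}^{n\times p}$, $C\in\mathbb{R}^{m\times n}$, $H\in\mathbb{R}^{n\times m}$, $W=[w_{ij}]\in\mathbb{R}^{N\times N}$ with $w_{ii}=0$ for all $i$, $\Delta=\mathrm{diag}(\delta_1,\dots,\delta_N)$ with $\delta_i\in\{0,1\}$, and $h>0$. Put $\Phi_s=e^hI_{Nn}+(e^h-1)W\otimes HC$ and $\Psi_s=(e^h-1)(\Delta\otimes B)$, and assume $0$ is not an eigenvalue of $\Phi_s$. Then the discrete-time system $X(k+1)=\Phi_sX(k)+\Psi_sU(k)$ is controllable if and only if the continuous-time system $\dot X(t)=(I_{Nn}+W\otimes HC)X(t)+(\Delta\otimes B)U(t)$ is controllable.
   Context: The continuous-time system is controllable in the usual sense (equivalently its PBH rank condition holds for all $s\in\mathbb{C}$). The discrete-time system is called controllable if every initial state can be steered to the origin in finitely many steps. $\otimes$ is the Kronecker product. *)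

(* Kronecker product = tensmx (A *t B) from
   mathcomp-real-closed's mxtens.v (standard row-major Kronecker product). *)
From HB Require Import structures.
From mathcomp Require Import all_boot all_order all_algebra.
From mathcomp Require Export mxtens.
Set Implicit Arguments. Unset Strict Implicit. Unset Printing Implicit Defensive.
Import GRing.Theory.
Local Open Scope ring_scope.

(* Kalman controllability matrix [B, AB, ..., A^(d-1) B] : d x (d*q);
   column index j corresponds to block (mxtens_unindex j).1 and column
   (mxtens_unindex j).2 inside that block. *)
Definition ctrb_mx (R : pzRingType) (d q : nat) (A : 'M[R]_d) (B : 'M[R]_(d, q))
  : 'M[R]_(d, d * q) :=
  \matrix_(i < d, j < d * q)
     ((A ^+ (mxtens_unindex j).1 *m B) i (mxtens_unindex j).2).

Definition ct_controllable (F : fieldType) (d q : nat)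
  (A : 'M[F]_d) (B : 'M[F]_(d, q)) : Prop :=
  \rank (ctrb_mx A B) = d.

Fixpoint dt_traj (R : pzRingType) (d q : nat) (Phi : 'M[R]_d) (Psi : 'M[R]_(d, q))
  (x0 : 'cV[R]_d) (u : nat -> 'cV[R]_q) (k : nat) : 'cV[R]_d :=
  match k with
  | 0 => x0
  | k'.+1 => Phi *m dt_traj Phi Psi x0 u k' + Psi *m u k'
  end.

Definition dt_controllable (R : pzRingType) (d q : nat)
  (Phi : 'M[R]_d) (Psi : 'M[R]_(d, q)) : Prop :=
  forall x0 : 'cV[R]_d, exists (k : nat) (u : nat -> 'cV[R]_q),
    dt_traj Phi Psi x0 u k = 0.

From HB Require Import structures.
From mathcomp Require Import all_boot all_order all_algebra.
From mathcomp Require Import all_classical all_reals all_analysis.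
From mathcomp Require Import mxtens.
Set Implicit Arguments. Unset Strict Implicit. Unset Printing Implicit Defensive.
Import GRing.Theory Num.Theory.
Local Open Scope ring_scope.

(* A state v is reachable for (X, Y) when it lies in the span of the columns
   of Y, XY, ..., X^(n-1)Y.  By Cayley-Hamilton this span contains X^k Y u for
   every k and is stable under every polynomial in X.  As A and 1 + aA (a != 0)
   are polynomials in each other, (A, B) and (1 + aA, aB) have the same
   reachable states.  The Kalman rank condition says that every state is
   reachable for (A, B).  For an invertible Phi, whose inverse is again a
   polynomial in Phi, x0 can be steered to 0 in k steps iff Phi^k x0 is
   reachable, i.e. iff x0 is.  The corollary is the case A = I + W (x) HC,
   B = Delta (x) B and a = e^h - 1 > 0. *)

Lemma horner_mx_sum_wide (R : comNzRingType) n' (A : 'M[R]_n'.+1)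
    (p : {poly R}) k :
  (size p <= k)%N -> horner_mx A p = \sum_(i < k) p`_i *: A ^+ i.
Proof.
move=> le_p_k; have {1}-> : p = \poly_(i < k) p`_i.
  apply/polyP => i; rewrite coef_poly; case: ltnP => // le_k_i.
  by rewrite nth_default // (leq_trans le_p_k).
rewrite poly_def raddf_sum /=; apply: eq_bigr => i _.
by rewrite horner_mxZ rmorphXn /= horner_mx_X.
Qed.

Lemma dt_trajE (R : pzRingType) d q (X : 'M[R]_d) (Y : 'M[R]_(d, q)) x0 u k :
  dt_traj X Y x0 u k = X ^+ k *m x0 + \sum_(j < k) X ^+ j *m Y *m u (k - j.+1)%N.
Proof.
elim: k => [|k IH] /=; first by rewrite expr0 mul1mx big_ord0 addr0.
rewrite IH big_ord_recl /= expr0 mul1mx subSS subn0 mulmxDr mulmxA.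
rewrite -[X *m X ^+ k]exprS mulmx_sumr -addrA; congr (_ + _).
rewrite addrC; congr (_ + _); apply: eq_bigr => j _.
by rewrite !mulmxA -[X *m X ^+ j]exprS.
Qed.

Lemma unitmx_eigenvalue0 (F : fieldType) n (A : 'M[F]_n) :
  (A \in unitmx) = ~~ eigenvalue A 0.
Proof.
by rewrite /eigenvalue /eigenspace raddf0 subr0 kermx_eq0 negbK row_free_unit.
Qed.

Lemma mxrank_full_colP (F : fieldType) m r (M : 'M[F]_(m, r)) :
  \rank M = m <-> forall v : 'cV_m, exists w, v = M *m w.
Proof.
rewrite -mxrank_tr; split=> [fullMT v | onto].
  have : (v^T <= M^T)%MS.
    by rewrite (submx_trans (submx1 _)) // sub1mx /row_full fullMT.
  by case/submxP=> w vw; exists w^T; rewrite -[v]trmxK vw trmx_mul trmxK.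
apply/eqP; rewrite -[_ == _]/(row_full _) -sub1mx; apply/row_subP=> i.
have [w wE] := onto (row i 1%:M)^T.
by rewrite -[row i _]trmxK wE trmx_mul submxMl.
Qed.

Lemma unitmx_horner_inv (F : fieldType) n' (X : 'M[F]_n'.+1) :
  X \in unitmx -> exists p, horner_mx X p *m X = 1%:M.
Proof.
move=> X_unit; set c := char_poly X.
have c0_neq0 : c`_0 != 0.
  by rewrite char_poly_det mulf_eq0 negb_or signr_eq0 -unitfE -unitmxE.
have cE : c = (c`_0)%:P + drop_poly 1 c * 'X.
  rewrite -{1}(poly_take_drop 1 c); congr (_ + _).
  by apply/polyP=> -[|i]; rewrite coef_take_poly coefC.
have := Cayley_Hamilton X.
rewrite -/c cE rmorphD rmorphM /= horner_mx_C horner_mx_X => /eqP.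
rewrite addrC addr_eq0 -mulmxE => /eqP dX.
exists (- (c`_0)^-1 *: drop_poly 1 c).
by rewrite horner_mxZ -scalemxAl dX scaleNr scalerN opprK scale_scalar_mx mulVf.
Qed.

Section Reachable.
Variables (F : fieldType) (n' q : nat).
Local Notation n := n'.+1.
Implicit Types (X : 'M[F]_n) (Y : 'M[F]_(n, q)) (v : 'cV[F]_n) (p : {poly F}).

Definition reachable X Y v :=
  exists u : nat -> 'cV[F]_q, v = \sum_(k < n) X ^+ k *m Y *m u k.

Lemma reachable0 X Y : reachable X Y 0.
Proof. by exists (fun _ => 0); rewrite big1 // => k _; rewrite mulmx0. Qed.

Lemma reachableD X Y v w :
  reachable X Y v -> reachable X Y w -> reachable X Y (v + w).
Proof.
move=> [u ->] [u' ->]; exists (fun k => u k + u' k); rewrite -big_split /=.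
by apply: eq_bigr => k _; rewrite mulmxDr.
Qed.

Lemma reachableZ X Y c v : reachable X Y v -> reachable X Y (c *: v).
Proof.
move=> [u ->]; exists (fun k => c *: u k); rewrite scaler_sumr.
by apply: eq_bigr => k _; rewrite scalemxAr.
Qed.

Lemma reachable_sum X Y (I : Type) (r : seq I) (P : pred I) (f : I -> 'cV_n) :
  (forall i, P i -> reachable X Y (f i)) ->
  reachable X Y (\sum_(i <- r | P i) f i).
Proof.
by apply: (big_ind (reachable X Y)); [exact: reachable0 | exact: reachableD].
Qed.

Lemma horner_mx_modp_char X p : horner_mx X p = horner_mx X (p %% char_poly X).
Proof.
rewrite {1}(divp_eq p (char_poly X)) rmorphD rmorphM /=.
by rewrite Cayley_Hamilton mulr0 add0r.
Qed.

Lemma reachable_horner X Y p u : reachable X Y (horner_mx X p *m Y *m u).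
Proof.
have le_r_n : (size (p %% char_poly X)%R <= n)%N.
  by rewrite -ltnS -(size_char_poly X) ltn_modp -size_poly_eq0 size_char_poly.
exists (fun k => (p %% char_poly X)`_k *: u).
rewrite horner_mx_modp_char (horner_mx_sum_wide _ le_r_n) !mulmx_suml.
by apply: eq_bigr => k _; rewrite -!scalemxAl scalemxAr.
Qed.

Lemma reachable_exp X Y k u : reachable X Y (X ^+ k *m Y *m u).
Proof. by have := reachable_horner X Y 'X^k u; rewrite rmorphXn /= horner_mx_X. Qed.

Lemma reachable_hornerM X Y p v :
  reachable X Y v -> reachable X Y (horner_mx X p *m v).
Proof.
case=> u ->; rewrite mulmx_sumr; apply: reachable_sum => k _.
have -> : horner_mx X p *m (X ^+ k *m Y *m u k) =
          horner_mx X (p * 'X^k) *m Y *m u k.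
  by rewrite rmorphM rmorphXn /= horner_mx_X !mulmxA.
exact: reachable_horner.
Qed.

Lemma reachable_horner_sub X Y p c v :
  reachable (horner_mx X p) (c *: Y) v -> reachable X Y v.
Proof.
case=> u ->; apply: reachable_sum => k _.
by rewrite -rmorphXn -scalemxAr -scalemxAl scalemxAr; exact: reachable_horner.
Qed.

Lemma reachable_unitmx_expK X Y k v :
  X \in unitmx -> reachable X Y (X ^+ k *m v) -> reachable X Y v.
Proof.
move=> /unitmx_horner_inv[p pX1].
elim: k v => [|k IHk] v; first by rewrite expr0 mul1mx.
rewrite exprSr -mulmxA => /IHk /(reachable_hornerM p).
by rewrite mulmxA pX1 mul1mx.
Qed.

Lemma reachable_shift A B a v : a != 0 ->
  reachable (1%:M + a *: A) (a *: B) v <-> reachable A B v.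
Proof.
move=> a_neq0; split.
  have PhiE : 1%:M + a *: A = horner_mx A (1 + a *: 'X).
    by rewrite rmorphD /= horner_mxZ horner_mx_X -polyC1 horner_mx_C.
  by rewrite PhiE; exact: reachable_horner_sub.
have AE : A = horner_mx (1%:M + a *: A) (a^-1 *: ('X - 1)).
  rewrite horner_mxZ rmorphB /= horner_mx_X -polyC1 horner_mx_C.
  by rewrite [_ + a *: A]addrC addrK scalerA mulVf ?scale1r.
have BE : B = a^-1 *: (a *: B) by rewrite scalerA mulVf ?scale1r.
move=> reach; apply: (reachable_horner_sub (p := a^-1 *: ('X - 1)) (c := a^-1)).
by rewrite -AE -BE.
Qed.

Lemma ctrb_mx_mulE X Y (w : 'cV_(n * q)) : ctrb_mx X Y *m w =
  \sum_(k < n) X ^+ k *m Y *m \col_(l < q) w (mxtens_index (k, l)) 0.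
Proof.
apply/matrixP => i j; rewrite (ord1 j) !mxE summxE.
rewrite (reindex (@mxtens_index n q)) /=; last first.
  exists (@mxtens_unindex n q) => x _.
    exact: mxtens_indexK.
  exact: mxtens_unindexK.
under [RHS]eq_bigr do rewrite mxE.
rewrite pair_big /=; apply: eq_bigr => -[k l] _.
by rewrite !mxE mxtens_indexK.
Qed.

Lemma reachable_ctrbP X Y v :
  reachable X Y v <-> exists w, v = ctrb_mx X Y *m w.
Proof.
split=> [[u ->] | [w ->]].
  exists (\col_j (u (mxtens_unindex j).1) (mxtens_unindex j).2 0).
  rewrite ctrb_mx_mulE; apply: eq_bigr => k _; congr (_ *m _).
  by apply/matrixP => l j; rewrite !mxE mxtens_indexK /= (ord1 j).
exists (fun k => \col_l w (mxtens_index (inord k, l)) 0).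
by rewrite ctrb_mx_mulE; apply: eq_bigr => k _; rewrite inord_val.
Qed.

Lemma ct_controllable_reachable X Y :
  ct_controllable X Y <-> forall v, reachable X Y v.
Proof.
split=> [/mxrank_full_colP onto v | reach]; first exact/reachable_ctrbP/onto.
by apply/mxrank_full_colP => v; apply/reachable_ctrbP/reach.
Qed.

Lemma dt_controllable_reachable X Y :
  X \in unitmx -> dt_controllable X Y <-> forall v, reachable X Y v.
Proof.
move=> X_unit; split=> [steer v | reach x0].
  have [k [u]] := steer v.
  rewrite dt_trajE => /eqP; rewrite addr_eq0 => /eqP Xkv.
  apply: (reachable_unitmx_expK (k := k) X_unit); rewrite Xkv -scaleN1r.
  by apply/reachableZ/reachable_sum => j _; apply: reachable_exp.
(* n steps suffice: feed in reverse order the inputs that reach - X^n x0. *)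
have [u uE] := reach (- (X ^+ n *m x0)).
exists n, (fun i => u (n - i.+1)%N); rewrite dt_trajE.
rewrite (eq_bigr (fun j : 'I_n => X ^+ j *m Y *m u j)) -?uE ?subrr // => j _.
by rewrite subnSK // subKn // ltnW.
Qed.
End Reachable.

Lemma dt_ct_controllable_shift (F : fieldType) d q
    (A : 'M[F]_d) (B : 'M[F]_(d, q)) a :
  a != 0 -> (1%:M + a *: A) \in unitmx ->
  dt_controllable (1%:M + a *: A) (a *: B) <-> ct_controllable A B.
Proof.
case: d A B => [|d] A B a_neq0 Phi_unit.
  split=> _; first by apply/eqP; rewrite -leqn0 rank_leq_row.
  by move=> x0; exists 0%N, (fun _ => 0); rewrite /= [x0]flatmx0.
have shiftP := reachable_shift A B _ a_neq0.
have dtP := dt_controllable_reachable (a *: B) Phi_unit.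
split=> [/dtP reach | /ct_controllable_reachable reach].
  by apply/ct_controllable_reachable => v; apply/shiftP/reach.
by apply/dtP => v; apply/shiftP/reach.
Qed.

Theorem corollary12 (R : realType) (N n m p : nat)
  (hN : (0 < N)%N) (hn : (0 < n)%N) (hm : (0 < m)%N) (hp : (0 < p)%N)
  (B : 'M[R]_(n, p)) (C : 'M[R]_(m, n)) (H : 'M[R]_(n, m))
  (W : 'M[R]_N) (hW : forall i : 'I_N, W i i = 0)
  (delta : 'I_N -> bool) (h : R) (hh : 0 < h) :
  let Delta : 'M[R]_N := diag_mx (\row_i (delta i)%:R) in
  let Phi_s : 'M[R]_(N * n) :=
    expR h *: 1%:M + (expR h - 1) *: tensmx W (H *m C) in
  let Psi_s : 'M[R]_(N * n, N * p) := (expR h - 1) *: tensmx Delta B in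
  ~~ eigenvalue Phi_s 0 ->
  (dt_controllable Phi_s Psi_s <->
   ct_controllable (1%:M + tensmx W (H *m C)) (tensmx Delta B)).
Proof.
move=> Delta Phi_s Psi_s; rewrite -unitmx_eigenvalue0.
have eh1_neq0 : expR h - 1 != 0 by rewrite lt0r_neq0 // subr_gt0 expR_gt1.
have -> : Phi_s = 1%:M + (expR h - 1) *: (1%:M + tensmx W (H *m C)).
  rewrite /Phi_s scalerDr addrA; congr (_ + _).
  by rewrite -{2}[1%:M]scale1r -scalerDl addrC subrK.
exact: dt_ct_controllable_shift.
Qed.
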